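(* For every integer $r \geq 2$, \[n(r,3,3) = \begin{cases} r + r/2 & \text{if } r \text{ is even;}\\ r + \lceil r/2\rceil + 1 & \text{if } r \text{ is odd and } \lceil r/2\rceil \text{ is even;}\\ r + \lceil r/2\rceil + 2 & \text{if } r \text{ is odd and } \lceil r/2\rceil \text{ is odd.}\end{cases}\]
   Context: All graphs are finite and simple. For integers $r\geq 2$, $g\geq 3$, $\chi\geq 2$, an $(r,g,\chi)$-graph is an $r$-regular graph with girth (length of a shortest cycle) exactly $g$ and chromatic number exactly $\chi$. An $(r,g,\chi)$-cage is an $(r,g,\chi)$-graph of minimum order, and $n(r,g,\chi)$ denotes the order of an $(r,g,\chi)$-cage, i.e. the minimum number of vertices of an $(r,g,\chi)$-graph. *)

From mathcomp Require Import all_boot.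
Set Implicit Arguments. Unset Strict Implicit. Unset Printing Implicit Defensive.

Definition simple_graph (T : finType) (e : rel T) : Prop :=
  symmetric e /\ irreflexive e.

Definition regular (T : finType) (e : rel T) (r : nat) : Prop :=
  forall v : T, #|[pred w | e v w]| = r.

Definition has_cycle_of_length (T : finType) (e : rel T) (k : nat) : Prop :=
  exists s : seq T, [/\ size s = k, 3 <= k, uniq s & cycle e s].

Definition has_girth (T : finType) (e : rel T) (g : nat) : Prop :=
  has_cycle_of_length e g /\ (forall k, k < g -> ~ has_cycle_of_length e k).

Definition colorable (T : finType) (e : rel T) (k : nat) : Prop :=
  exists f : T -> 'I_k, forall x y, e x y -> f x != f y.

Definition has_chromatic_number (T : finType) (e : rel T) (chi : nat) : Prop :=
  colorable e chi /\ (forall k, k < chi -> ~ colorable e k).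

Definition rgchi_graph (T : finType) (e : rel T) (r g chi : nat) : Prop :=
  [/\ simple_graph e, regular e r, has_girth e g & has_chromatic_number e chi].

(* n is the order of an (r,g,chi)-cage, i.e. n = n(r,g,chi): there is an
   (r,g,chi)-graph on n vertices and every (r,g,chi)-graph has >= n vertices. *)
Definition is_cage_order (r g chi n : nat) : Prop :=
  (exists e : rel 'I_n, rgchi_graph e r g chi) /\
  (forall (T : finType) (e : rel T), rgchi_graph e r g chi -> n <= #|T|).

From mathcomp Require Import all_boot zify.
Set Implicit Arguments. Unset Strict Implicit. Unset Printing Implicit Defensive.

(* In an (r,3,3)-graph on n vertices fix a proper 3-colouring.  A triangle
   meets all three colour classes, and a vertex has no neighbour in its own
   class, so r + |C| <= n for every class C; summing over the classes gives
   3r <= 2n.  For odd r the handshake lemma makes n even, and 2n = 3r + 1 is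
   impossible: two classes would then be tight (completely joined to the rest
   of the graph), so any vertex of the third class sees both of them, which
   makes the third class tight too and forces 2n = 3r.  The bounds are
   attained by balanced complete tripartite graphs from which edge-disjoint
   matchings across the parts are deleted: K_{m,m,m} for r = 2m,
   K_{2q,2q,2q} minus a perfect matching for r = 4q - 1, and
   K_{2p,2p-1,2p-1} minus a perfect matching and a matching of the two smaller
   parts for r = 4p - 3. *)

Lemma triangle_girth3 (T : finType) (e : rel T) x y z :
  irreflexive e -> e x y -> e y z -> e z x -> has_girth e 3.
Proof.
move=> e_irr exy eyz ezx; split=> [|k lt_k3 [s [_ le3k _ _]]]; last by lia.
exists [:: x; y; z]; split => //=; last by rewrite exy eyz ezx.
have neq u v : e u v -> u != v by apply: contraTneq => ->; rewrite e_irr.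
by rewrite !inE !negb_or (neq _ _ exy) (neq _ _ eyz) eq_sym (neq _ _ ezx).
Qed.

Lemma triangle_chromatic3 (T : finType) (e : rel T) (f : T -> 'I_3) x y z :
  (forall u v, e u v -> f u != f v) -> e x y -> e y z -> e z x ->
  has_chromatic_number e 3.
Proof.
move=> f_proper exy eyz ezx; split=> [|k lt_k3 [g g_proper]]; first by exists f.
have := g_proper _ _ exy; have := g_proper _ _ eyz; have := g_proper _ _ ezx.
rewrite -!val_eqE /=.
have := ltn_ord (g x); have := ltn_ord (g y); have := ltn_ord (g z); lia.
Qed.

Lemma regular_card_neighbours (T : finType) (e : rel T) r v :
  regular e r -> #|[set w | e v w]| = r.
Proof. by move=> e_reg; rewrite -(e_reg v); apply: eq_card => w; rewrite inE. Qed.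

Lemma sum_degrees_even (T : finType) (e : rel T) :
  symmetric e -> irreflexive e -> ~~ odd (\sum_v #|[set w | e v w]|).
Proof.
move=> e_sym e_irr.
pose before (v w : T) := (enum_rank v < enum_rank w)%N.
have split_deg v : #|[set w | e v w]| =
    \sum_w ((e v w && before v w) + (e v w && before w v)).
  rewrite -sum1_card big_mkcond /=; apply: eq_bigr => w _; rewrite inE.
  have [evw|] := boolP (e v w) => //=.
  have : enum_rank v != enum_rank w.
    by apply: contraTneq evw => /enum_rank_inj ->; rewrite e_irr.
  rewrite -val_eqE /before /=; lia.
under eq_bigr => v _ do rewrite split_deg big_split /=.
rewrite big_split /= [X in _ + X]exchange_big /=.
under [X in _ + X]eq_bigr => w _ do under eq_bigr => v _ do rewrite e_sym.
by rewrite addnn odd_double.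
Qed.

Lemma regular_odd_card_even (T : finType) (e : rel T) r :
  symmetric e -> irreflexive e -> regular e r -> odd r -> ~~ odd #|T|.
Proof.
move=> e_sym e_irr e_reg r_odd; have := sum_degrees_even e_sym e_irr.
under eq_bigr => v _ do rewrite (regular_card_neighbours v e_reg).
by rewrite sum_nat_const oddM r_odd andbT.
Qed.

Section RegularThreeColoured.

Variables (T : finType) (e : rel T) (r : nat) (f : T -> 'I_3).
Hypotheses (e_sym : symmetric e) (e_reg : regular e r).
Hypothesis f_proper : forall u v, e u v -> f u != f v.

Local Notation class c := [set w | f w == c].

Lemma card_classU a b : a != b -> #|class a :|: class b| = #|class a| + #|class b|.
Proof.
move=> neq_ab; rewrite cardsU; suff -> : class a :&: class b = set0 by rewrite cards0 subn0.
by apply/setP => w; rewrite !inE; apply: contraNF neq_ab => /andP[/eqP <- /eqP <-].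
Qed.

Lemma neighbours_sub_classC v : [set w | e v w] \subset ~: class (f v).
Proof. by apply/subsetP => w; rewrite !inE eq_sym => /f_proper. Qed.

Lemma degree_add_class_le v : r + #|class (f v)| <= #|T|.
Proof.
rewrite -(cardsC (class (f v))) addnC leq_add2l -(regular_card_neighbours v e_reg).
exact/subset_leq_card/neighbours_sub_classC.
Qed.

Lemma tight_class_adj v w :
  r + #|class (f v)| = #|T| -> f w != f v -> e v w.
Proof.
move=> tight_v fw_neq.
have card_eq : #|[set w | e v w]| = #|~: class (f v)|.
  by rewrite (regular_card_neighbours v e_reg) cardsCs setCK; lia.
have := subset_cardP card_eq (neighbours_sub_classC v) => /(_ w).
by rewrite !inE fw_neq.
Qed.

Lemma tight_classes_card_le u v w : f u != f v -> f v != f w -> f w != f u ->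
  r + #|class (f u)| = #|T| -> r + #|class (f v)| = #|T| ->
  #|class (f u)| + #|class (f v)| <= r.
Proof.
move=> fuv fvw fwu tight_u tight_v.
rewrite -card_classU // -(regular_card_neighbours w e_reg).
apply/subset_leq_card/subsetP => t; rewrite !inE => /orP[] /eqP ft;
  by rewrite e_sym; apply: tight_class_adj; rewrite ft // eq_sym.
Qed.

Variables (x y z : T).
Hypotheses (exy : e x y) (eyz : e y z) (ezx : e z x).

Lemma card_triangle_classes : #|class (f x)| + #|class (f y)| + #|class (f z)| = #|T|.
Proof.
have fxy := f_proper exy; have fyz := f_proper eyz; have fzx := f_proper ezx.
rewrite -addnA -card_classU // -(cardsC (class (f x))).
suff -> : class (f y) :|: class (f z) = ~: class (f x) by [].
apply/setP => w; rewrite !inE; move: fxy fyz fzx; rewrite -!val_eqE /=.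
have := ltn_ord (f w); have := ltn_ord (f x); have := ltn_ord (f y); have := ltn_ord (f z).
lia.
Qed.

Lemma triangle_regular_card_ge : 3 * r <= 2 * #|T|.
Proof.
have := degree_add_class_le x; have := degree_add_class_le y.
have := degree_add_class_le z; have := card_triangle_classes; lia.
Qed.

Lemma triangle_regular_card_neq : 2 * #|T| != 3 * r + 1.
Proof.
have fxy := f_proper exy; have fyz := f_proper eyz; have fzx := f_proper ezx.
have := tight_classes_card_le fxy fyz fzx; have := tight_classes_card_le fyz fzx fxy.
have := tight_classes_card_le fzx fxy fyz.
have := degree_add_class_le x; have := degree_add_class_le y.
have := degree_add_class_le z; have := card_triangle_classes; lia.
Qed.

End RegularThreeColoured.

Lemma count_predD1 (T : eqType) (P : pred T) (a : T) (s : seq T) : uniq s ->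
  count (fun x => P x && (x != a)) s = count P s - (P a && (a \in s)).
Proof.
move=> s_uniq.
have count_eq : count (fun x => P x && (x == a)) s = P a && (a \in s).
  rewrite (eq_count (a2 := fun x => P a && (x == a))); last first.
    by move=> x; case: eqP => [->|]; rewrite ?andbF ?andbT.
  by case: (P a); rewrite ?count_pred0 // -(count_uniq_mem a s_uniq).
have := count_predC (pred1 a) (filter P s).
rewrite !count_filter size_filter -count_eq => <-.
rewrite (eq_count (a1 := predI (pred1 a) P) (a2 := fun x => P x && (x == a))).
  by rewrite addKn; apply: eq_count => x /=; rewrite andbC.
by move=> x /=; rewrite andbC.
Qed.

Lemma count_iota_ltn n k : k <= n -> count (fun j => j < k) (iota 0 n) = k.
Proof. by move=> le_kn; rewrite -size_filter (filter_iota_ltn 0) // size_iota. Qed.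

Lemma count_iota_interval n lo hi : lo <= hi <= n ->
  count (fun j => lo <= j < hi) (iota 0 n) = hi - lo.
Proof.
move=> /andP[le_lo_hi le_hi_n].
have := count_predUI (fun j => j < lo) (fun j => lo <= j < hi) (iota 0 n).
rewrite (eq_count (a1 := predU _ _) (a2 := fun j => j < hi)); last by move=> j /=; lia.
rewrite (eq_count (a1 := predI _ _) (a2 := pred0)); last by move=> j /=; lia.
rewrite count_pred0 !count_iota_ltn //; lia.
Qed.

Lemma count_iota_outside n lo hi : lo <= hi <= n ->
  count (fun j => ~~ (lo <= j < hi)) (iota 0 n) = n - (hi - lo).
Proof.
move=> le_lo_hi_n; rewrite -[in RHS](size_iota 0 n).
by rewrite -(count_predC (fun j => lo <= j < hi)) count_iota_interval // addKn.
Qed.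

Lemma card_ord_count n (P : pred nat) : #|[pred j : 'I_n | P j]| = count P (iota 0 n).
Proof.
rewrite cardE /enum_mem size_filter -enumT -val_enum_ord count_map.
by apply: eq_count.
Qed.

(* The complete multipartite graph on [0, n) whose parts are the fibres of col,
   with the edges {i, f1 i} and {i, f2 i} deleted.  The involutions f1, f2
   encode matchings; a fixed point of f1 or f2 deletes nothing. *)
Definition multipartite_minus (col f1 f2 : nat -> nat) (i j : nat) : bool :=
  [&& col i != col j, j != f1 i & j != f2 i].

Definition crossing_involution n (col f : nat -> nat) : Prop :=
  forall i, i < n -> [/\ f i < n, f (f i) = i & f i != i -> col (f i) != col i].

Lemma crossing_involution_id n col : crossing_involution n col id.
Proof. by move=> i lt_in; rewrite /= eqxx. Qed.

Lemma crossing_involution_eq n col f i j : crossing_involution n col f ->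
  i < n -> j < n -> (j == f i) = (i == f j).
Proof.
move=> f_inv lt_in lt_jn; have [_ ffi _] := f_inv _ lt_in; have [_ ffj _] := f_inv _ lt_jn.
by apply/eqP/eqP => [->|->].
Qed.

Lemma multipartite_minus_sym n col f1 f2 i j :
  crossing_involution n col f1 -> crossing_involution n col f2 -> i < n -> j < n ->
  multipartite_minus col f1 f2 i j = multipartite_minus col f1 f2 j i.
Proof.
move=> f1_inv f2_inv lt_in lt_jn; rewrite /multipartite_minus eq_sym.
by rewrite (crossing_involution_eq f1_inv) // (crossing_involution_eq f2_inv).
Qed.

Lemma count_multipartite_minus n col f1 f2 i :
  crossing_involution n col f1 -> crossing_involution n col f2 -> i < n ->
  (f2 i != i -> f2 i != f1 i) ->
  count (multipartite_minus col f1 f2 i) (iota 0 n) =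
  count (fun j => col i != col j) (iota 0 n) - (f1 i != i) - (f2 i != i).
Proof.
move=> f1_inv f2_inv lt_in f_disj.
have [lt_f1 _ f1_cross] := f1_inv _ lt_in; have [lt_f2 _ f2_cross] := f2_inv _ lt_in.
rewrite (eq_count (a2 := fun j => [&& col i != col j & j != f1 i] && (j != f2 i))).
  rewrite !count_predD1 ?iota_uniq // !mem_iota lt_f1 lt_f2 !andbT.
  have cross1 : (col i != col (f1 i)) = (f1 i != i).
    have [->|f1_move] := eqVneq (f1 i) i; first by rewrite !eqxx.
    by rewrite eq_sym (f1_cross f1_move).
  have cross2 : [&& col i != col (f2 i) & f2 i != f1 i] = (f2 i != i).
    have [->|f2_move] := eqVneq (f2 i) i; first by rewrite !eqxx.
    by rewrite eq_sym (f2_cross f2_move) (f_disj f2_move).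
  by rewrite cross1 cross2.
by move=> j; rewrite /multipartite_minus andbA.
Qed.

Lemma multipartite_minus_rgchi_graph n r col f1 f2 x y z :
  crossing_involution n col f1 -> crossing_involution n col f2 ->
  (forall i, i < n -> f2 i != i -> f2 i != f1 i) ->
  (forall i, i < n -> col i < 3) ->
  (forall i, i < n ->
     count (fun j => col i != col j) (iota 0 n) - (f1 i != i) - (f2 i != i) = r) ->
  x < n -> y < n -> z < n ->
  [&& multipartite_minus col f1 f2 x y, multipartite_minus col f1 f2 y z
    & multipartite_minus col f1 f2 z x] ->
  exists e : rel 'I_n, rgchi_graph e r 3 3.
Proof.
move=> f1_inv f2_inv f_disj col_lt3 deg_r lt_xn lt_yn lt_zn /and3P[exy eyz ezx].
pose e (i j : 'I_n) := multipartite_minus col f1 f2 i j.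
pose X := Ordinal lt_xn; pose Y := Ordinal lt_yn; pose Z := Ordinal lt_zn.
have e_irr : irreflexive e by move=> i; rewrite /e /multipartite_minus eqxx.
have e_proper u v : e u v -> (inord (col u) : 'I_3) != inord (col v).
  by case/and3P=> neq_col _ _; rewrite -val_eqE /= !inordK ?col_lt3.
exists e; split.
- by split=> // i j; exact: multipartite_minus_sym f1_inv f2_inv (ltn_ord i) (ltn_ord j).
- move=> v; have lt_vn := ltn_ord v.
  by rewrite card_ord_count (count_multipartite_minus f1_inv f2_inv lt_vn (f_disj _ lt_vn)) deg_r.
- exact: (@triangle_girth3 _ e X Y Z).
- exact: (@triangle_chromatic3 _ e _ X Y Z e_proper).
Qed.

Definition interval_col (c1 c2 i : nat) : nat :=
  if i < c1 then 0 else if i < c2 then 1 else 2.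

Lemma count_interval_col_neq n c1 c2 i : c1 <= c2 <= n ->
  count (fun j => interval_col c1 c2 i != interval_col c1 c2 j) (iota 0 n) =
  n - (if i < c1 then c1 else if i < c2 then c2 - c1 else n - c2).
Proof.
move=> le_c1_c2_n.
pose lo := if i < c1 then 0 else if i < c2 then c1 else c2.
pose hi := if i < c1 then c1 else if i < c2 then c2 else n.
rewrite -(eq_in_count (a1 := fun j => ~~ (lo <= j < hi))); last first.
  by move=> j; rewrite mem_iota /interval_col /lo /hi; repeat case: ifP; lia.
by rewrite count_iota_outside /lo /hi; repeat case: ifP; lia.
Qed.

Lemma complete_tripartite_rgchi_graph m : 0 < m ->
  exists e : rel 'I_(3 * m), rgchi_graph e (2 * m) 3 3.
Proof.
move=> m_gt0.
apply: (@multipartite_minus_rgchi_graph _ _ (interval_col m (2 * m)) id id 0 m (2 * m));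
  try lia.
- exact: crossing_involution_id.
- exact: crossing_involution_id.
- by move=> i lt_i; rewrite /interval_col; repeat case: ifP.
- move=> i lt_i; rewrite count_interval_col_neq; last lia.
  by rewrite /= eqxx; repeat case: ifP; lia.
- by rewrite /multipartite_minus /interval_col; repeat case: ifP; lia.
Qed.

Definition antipodal_matching q i := if i < 3 * q then i + 3 * q else i - 3 * q.

Lemma tripartite_minus_matching_rgchi_graph q : 0 < q ->
  exists e : rel 'I_(6 * q), rgchi_graph e (4 * q - 1) 3 3.
Proof.
move=> q_gt0.
apply: (@multipartite_minus_rgchi_graph _ _ (interval_col (2 * q) (4 * q))
  (antipodal_matching q) id 0 (2 * q) (4 * q)); try lia.
- move=> i lt_i; split; rewrite /antipodal_matching; repeat case: ifP;
    rewrite /interval_col; repeat case: ifP; lia.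
- exact: crossing_involution_id.
- by move=> i lt_i; rewrite /interval_col; repeat case: ifP.
- move=> i lt_i; rewrite count_interval_col_neq; last lia.
  by rewrite /= eqxx /antipodal_matching; repeat case: ifP; lia.
- by rewrite /multipartite_minus /interval_col /antipodal_matching; repeat case: ifP; lia.
Qed.

Section TwoMatchings.

Variable p : nat.
Hypothesis p_gt1 : 1 < p.

Local Notation col := (interval_col (2 * p) (4 * p - 1)).

(* With parts A = [0, 2p), B = [2p, 4p-1) and C = [4p-1, 6p-2), cross_matching
   is a perfect matching pairing the first half of A with the first p vertices
   of B, the second half of A with the last p vertices of C, and the remaining
   p-1 vertices of B with the remaining p-1 vertices of C; upper_matching pairs
   B with C by a shift and leaves A fixed.  So A-vertices lose one neighbour
   and all others lose two. *)
Definition cross_matching i :=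
  if i < p then i + 2 * p else if i < 2 * p then i + 4 * p - 2
  else if i < 3 * p then i - 2 * p else if i < 4 * p - 1 then i + p - 1
  else if i < 5 * p - 2 then i - (p - 1) else i - (4 * p - 2).

Definition upper_matching i :=
  if i < 2 * p then i else if i < 4 * p - 1 then i + (2 * p - 1) else i - (2 * p - 1).

Lemma cross_matching_involution : crossing_involution (6 * p - 2) col cross_matching.
Proof.
move=> i lt_i; split; rewrite /cross_matching; repeat case: ifP;
  rewrite /interval_col; repeat case: ifP; lia.
Qed.

Lemma upper_matching_involution : crossing_involution (6 * p - 2) col upper_matching.
Proof.
move=> i lt_i; split; rewrite /upper_matching; repeat case: ifP;
  rewrite /interval_col; repeat case: ifP; lia.
Qed.

Lemma cross_matching_neq i : i < 6 * p - 2 -> cross_matching i != i.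
Proof. by move=> lt_i; rewrite /cross_matching; repeat case: ifP; lia. Qed.

Lemma upper_matching_neq i : (upper_matching i != i) = (2 * p <= i).
Proof. by rewrite /upper_matching; repeat case: ifP; lia. Qed.

Lemma upper_cross_matching_neq i :
  i < 6 * p - 2 -> upper_matching i != i -> upper_matching i != cross_matching i.
Proof. by move=> lt_i; rewrite /cross_matching /upper_matching; repeat case: ifP; lia. Qed.

Lemma tripartite_minus_two_matchings_rgchi_graph :
  exists e : rel 'I_(6 * p - 2), rgchi_graph e (4 * p - 3) 3 3.
Proof.
apply: (@multipartite_minus_rgchi_graph _ _ col cross_matching upper_matching
  0 (2 * p + 1) (4 * p - 1)); try lia.
- exact: cross_matching_involution.
- exact: upper_matching_involution.
- exact: upper_cross_matching_neq.
- by move=> i lt_i; rewrite /interval_col; repeat case: ifP.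
- move=> i lt_i; rewrite count_interval_col_neq; last lia.
  by rewrite cross_matching_neq // upper_matching_neq; repeat case: ifP; lia.
- apply/and3P; split; rewrite /multipartite_minus /cross_matching /upper_matching;
    repeat case: ifP; rewrite /interval_col; repeat case: ifP; lia.
Qed.

End TwoMatchings.

Lemma girth3_triangle (T : finType) (e : rel T) :
  has_girth e 3 -> exists x y z, [/\ e x y, e y z & e z x].
Proof.
case=> [[s [size_s _ _ s_cycle]] _]; case: s size_s s_cycle => [|x [|y [|z [|]]]] //= _.
by rewrite andbT => /and3P[exy eyz ezx]; exists x, y, z.
Qed.

Lemma rgchi33_card_bounds (T : finType) (e : rel T) r : rgchi_graph e r 3 3 ->
  3 * r <= 2 * #|T| /\ (odd r -> ~~ odd #|T| /\ 2 * #|T| != 3 * r + 1).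
Proof.
case=> [[e_sym e_irr] e_reg /girth3_triangle [x [y [z [exy eyz ezx]]]] [[f f_proper] _]].
split; first exact: (triangle_regular_card_ge e_reg f_proper exy eyz ezx).
move=> r_odd; split; first exact: (regular_odd_card_even e_sym e_irr e_reg r_odd).
exact: (triangle_regular_card_neq e_sym e_reg f_proper exy eyz ezx).
Qed.

Lemma cage_order_even m : 0 < m -> is_cage_order (2 * m) 3 3 (3 * m).
Proof.
move=> m_gt0; split; first exact: complete_tripartite_rgchi_graph.
by move=> T e /rgchi33_card_bounds; lia.
Qed.

Lemma cage_order_3mod4 q : 0 < q -> is_cage_order (4 * q - 1) 3 3 (6 * q).
Proof.
move=> q_gt0; split; first exact: tripartite_minus_matching_rgchi_graph.
by move=> T e /rgchi33_card_bounds; lia.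
Qed.

Lemma cage_order_1mod4 p : 1 < p -> is_cage_order (4 * p - 3) 3 3 (6 * p - 2).
Proof.
move=> p_gt1; split; first exact: tripartite_minus_two_matchings_rgchi_graph.
by move=> T e /rgchi33_card_bounds; lia.
Qed.

Theorem theorem3p2 (r : nat) (hr : 2 <= r) :
  is_cage_order r 3 3
    (if ~~ odd r then r + r %/ 2
     else if ~~ odd (r.+1 %/ 2) then r + r.+1 %/ 2 + 1
     else r + r.+1 %/ 2 + 2).
Proof.
case: ifP => [r_even|/negbFE r_odd].
  have [m m_gt0 ->] : exists2 m, 0 < m & r = 2 * m by exists (r %/ 2); lia.
  have -> : 2 * m + 2 * m %/ 2 = 3 * m by lia.
  exact: cage_order_even.
case: ifP => [half_even|/negbFE half_odd].
  have [q q_gt0 ->] : exists2 q, 0 < q & r = 4 * q - 1 by exists (r %/ 4 + 1); lia.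
  have -> : 4 * q - 1 + (4 * q - 1).+1 %/ 2 + 1 = 6 * q by lia.
  exact: cage_order_3mod4.
have [p p_gt1 ->] : exists2 p, 1 < p & r = 4 * p - 3 by exists (r %/ 4 + 1); lia.
have -> : 4 * p - 3 + (4 * p - 3).+1 %/ 2 + 2 = 6 * p - 2 by lia.
exact: cage_order_1mod4.
Qed.
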